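(* Let $d\geq 3$ and $n_1\geq\cdots\geq n_d\geq 2$ be integers, let $N=\prod_{i=1}^{d-1}n_i$, and let $\tilde f$ be a $Q_{d-1}$-magic vertex labeling of $\textsc{Grid}(n_1,\ldots,n_{d-1})$ with $Q_{d-1}$-magic sum $S$. Define $f:[n_1]\times\cdots\times[n_d]\to\{1,\ldots,\prod_{i=1}^d n_i\}$ by $$f(x_1,\ldots,x_d)=\begin{cases}\tilde f(x_1,\ldots,x_{d-1})+(x_d-1)N & \text{if } x_1+\cdots+x_{d-1}\text{ is even},\\ \tilde f(x_1,\ldots,x_{d-1})+(n_d-x_d)N & \text{if } x_1+\cdots+x_{d-1}\text{ is odd}.\end{cases}$$ Then $f$ is a $Q_d$-magic vertex labeling of $\textsc{Grid}(n_1,\ldots,n_d)$ with $Q_d$-magic sum $2S+2^{d-1}(n_d-1)N$.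
   Context: $[k]=\{1,\ldots,k\}$. The grid graph $\textsc{Grid}(n_1,\ldots,n_m)$ has vertex set $[n_1]\times\cdots\times[n_m]$ and edge set $\{\{\mathbf x,\mathbf y\}:\sum_{i=1}^m|x_i-y_i|=1\}$. The $m$-cube $Q_m$ is $\textsc{Grid}(2,\ldots,2)$ ($m$ entries). A bijection $f:V\to\{1,\ldots,|V|\}$ on the vertex set of a graph $G=(V,E)$ is an $H$-magic vertex labeling if there is a constant $c$ (the $H$-magic sum) with $\sum_{v\in V(H')}f(v)=c$ for every subgraph $H'\subseteq G$ isomorphic to $H$. *)

From mathcomp Require Import all_boot.
Set Implicit Arguments. Unset Strict Implicit. Unset Printing Implicit Defensive.

(* Vertices of Grid(n_1,...,n_m), with the sizes given by n : nat -> nat,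
   0-indexed: coordinate i (i < m) ranges over [n i].  A vertex stores
   0-based coordinates: x i : 'I_(n i) represents the value (x i).+1 in [n i]. *)
Definition gridV (m : nat) (n : nat -> nat) : finType :=
  {dffun forall i : 'I_m, 'I_(n i)}.

(* Edge relation: sum_i |x_i - y_i| = 1 (shift by 1 does not affect distances). *)
Definition grid_adj (m : nat) (n : nat -> nat) : rel (gridV m n) :=
  fun x y => \sum_(i < m) ((x i - y i) + (y i - x i)) == 1.

Definition cubeV (m : nat) : finType := gridV m (fun _ => 2).
Definition cube_adj (m : nat) : rel (cubeV m) := grid_adj (n:=fun _ => 2).

(* A subgraph H' of G isomorphic to H is the same as (the image of) an
   injective adjacency-preserving map phi : V(H) -> V(G); V(H') = image phi. *)
Definition subgraph_copy (VH VG : finType) (adjH : rel VH) (adjG : rel VG)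
  (phi : VH -> VG) : Prop :=
  injective phi /\ forall u v, adjH u v -> adjG (phi u) (phi v).

Definition magic_labeling (VH VG : finType) (adjH : rel VH) (adjG : rel VG)
  (f : VG -> nat) (c : nat) : Prop :=
  [/\ injective f,
      (forall v, 1 <= f v <= #|VG|),
      (forall k, 1 <= k <= #|VG| -> exists v, f v = k) &
      (forall phi : VH -> VG, subgraph_copy adjH adjG phi ->
         \sum_(u : VH) f (phi u) = c)].

Definition grid_restr (d : nat) (n : nat -> nat) (x : gridV d n) : gridV d.-1 n :=
  [ffun i : 'I_d.-1 => x (widen_ord (leq_pred d) i)].

Definition grid_coord (m : nat) (n : nat -> nat) (x : gridV m n) (k : nat) : nat :=
  nth 0 [seq nat_of_ord (x i) | i <- enum 'I_m] k.

Definition lift_label (d : nat) (n : nat -> nat) (ft : gridV d.-1 n -> nat)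
  (x : gridV d n) : nat :=
  let N := \prod_(i < d.-1) n i in
  let x' := grid_restr x in
  let xd := (grid_coord x d.-1).+1 in
  if ~~ odd (\sum_(i < d.-1) (nat_of_ord (x' i)).+1)
  then ft x' + (xd - 1) * N
  else ft x' + (n d.-1 - xd) * N.

(* A copy of Q_d in a grid is a translate of a unit box {a_i, a_i + 1}^d.
   Indeed each 2-face of the cube is sent to a unit parallelogram of the
   lattice, so each cube direction k is sent to one fixed unit vector w_k, and
   two directions cannot share an axis (two vertices would collide); hence
   every coordinate takes at most two consecutive values on the copy.
   Summing f over such a box, the tilde-f parts come from the two layers
   x_d = a_d and x_d = a_d + 1, each a copy of Q_(d-1), and give 2S.  Flipping
   the first coordinate inside the box changes the parity deciding the layer
   offset of f while keeping x_d, so the offsets of paired vertices add up to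
   (n_d - 1) N, which gives 2^(d-1) (n_d - 1) N. *)

Set Warnings "-notation-overridden,-ambiguous-paths".
From mathcomp Require Import all_boot all_algebra zify ring.
Import GRing.Theory Num.Theory.
Set Implicit Arguments. Unset Strict Implicit. Unset Printing Implicit Defensive.

Section UnitVectors.
Local Open Scope ring_scope.
Variable m : nat.
Implicit Types a b c : 'I_m -> int.

Definition l1norm a := \sum_i `|a i|.
Definition dot a b := \sum_i a i * b i.

Lemma l1norm1_coord a i : l1norm a = 1 -> `|a i| <= 1.
Proof.
move=> <-; rewrite /l1norm (bigD1 i) //= lerDl; exact: sumr_ge0.
Qed.

Lemma l1norm1_support a i j : l1norm a = 1 -> a i != 0 -> j != i -> a j = 0.
Proof.
move=> a1 /eqP ai0 ji; move: a1; rewrite /l1norm (bigD1 i) //= (bigD1 j) //=.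
set s := \sum_(_ < _ | _) _; have : 0 <= s by apply: sumr_ge0.
lia.
Qed.

Lemma dot_l1norm1 a : l1norm a = 1 -> dot a a = 1.
Proof.
move=> a1; rewrite -[RHS]a1; apply: eq_bigr => i _.
have := l1norm1_coord i a1; nia.
Qed.

Lemma dot_self_ge1 c i : c i != 0 -> 1 <= dot c c.
Proof.
move=> /eqP ci0; rewrite /dot (bigD1 i) //=.
set s := \sum_(_ < _ | _) _; have : 0 <= s by apply: sumr_ge0 => k _; rewrite -expr2 sqr_ge0.
nia.
Qed.

Lemma dot_self_add_scaled a b (s : int) :
  dot (fun i => a i + s * b i) (fun i => a i + s * b i)
  = dot a a + s * s * dot b b + 2 * s * dot a b.
Proof. by rewrite /dot !mulr_sumr -!big_split; apply: eq_bigr => i _ /=; ring. Qed.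

Lemma dot_l1norm1_le0 a b i :
  l1norm a = 1 -> l1norm b = 1 -> a i != b i -> dot a b <= 0.
Proof.
move=> a1 b1 /eqP abi.
have nz : a i + -1 * b i != 0 by apply/eqP; lia.
have := dot_self_ge1 (c := fun i => a i + -1 * b i) nz.
rewrite dot_self_add_scaled !dot_l1norm1 //; lia.
Qed.

Lemma dot_l1norm1_ge0 a b i :
  l1norm a = 1 -> l1norm b = 1 -> a i + b i != 0 -> 0 <= dot a b.
Proof.
move=> a1 b1; rewrite -[b i]mul1r => nz.
have := dot_self_ge1 (c := fun i => a i + 1 * b i) nz.
rewrite dot_self_add_scaled !dot_l1norm1 //; lia.
Qed.

(* With [a = x1 - x0]: [dot a (x3 - x1) >= 0] as [x3 <> x0], [dot a (x2 - x0) <= 0]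
   as [x2 <> x1], and their difference is [dot a (x3 - x2) - 1]; hence
   [dot a (x3 - x2) >= 1], which forces [x3 - x2 = a]. *)
Lemma l1norm1_parallelogram (x0 x1 x2 x3 : 'I_m -> int) i0 i1 :
  l1norm (fun i => x1 i - x0 i) = 1 -> l1norm (fun i => x2 i - x0 i) = 1 ->
  l1norm (fun i => x3 i - x1 i) = 1 -> l1norm (fun i => x3 i - x2 i) = 1 ->
  x0 i0 != x3 i0 -> x1 i1 != x2 i1 ->
  forall i, x3 i = x1 i + x2 i - x0 i.
Proof.
move=> n10 n20 n31 n32 x03 x12 i.
set a := fun i => x1 i - x0 i.
have E : dot a (fun i => x3 i - x1 i) =
   dot a (fun i => x2 i - x0 i) + dot a (fun i => x3 i - x2 i) - dot a a.
  rewrite /dot -big_split -sumrB; apply: eq_bigr => j _; rewrite /a /=; ring.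
rewrite dot_l1norm1 // in E.
have : 0 <= dot a (fun i => x3 i - x1 i).
  by apply: (dot_l1norm1_ge0 (i := i0)) => //; apply: contra x03; rewrite /a; lia.
have : dot a (fun i => x2 i - x0 i) <= 0.
  by apply: (dot_l1norm1_le0 (i := i1)) => //; apply: contra x12; rewrite /a; lia.
have [/eqP|] := boolP (a i == x3 i - x2 i); first by rewrite /a; lia.
by move/(dot_l1norm1_le0 n10 n32); rewrite -/a; lia.
Qed.

End UnitVectors.

Definition grid_vec m (n : nat -> nat) (x : gridV m n) (i : 'I_m) : int := (x i : nat)%:Z.

Lemma grid_adj_l1norm m (n : nat -> nat) (x y : gridV m n) :
  grid_adj x y -> l1norm (fun i => (grid_vec y i - grid_vec x i)%R) = 1%R.
Proof.
rewrite /grid_adj /l1norm => /eqP xy; rewrite -[1%R]/(Posz 1) -xy.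
rewrite (big_morph Posz PoszD (erefl _)); apply: eq_bigr => i _.
rewrite /grid_vec; case: (leqP (x i) (y i)); lia.
Qed.

Definition cube0 m : cubeV m := [ffun => ord0].
Definition cube_set m (u : cubeV m) (j : 'I_m) (t : 'I_2) : cubeV m :=
  [ffun i => if i == j then t else u i].

Lemma cube_setE m (u : cubeV m) j t i : cube_set u j t i = if i == j then t else u i.
Proof. by rewrite ffunE. Qed.

Lemma cube_setC m (u : cubeV m) j l s t :
  j != l -> cube_set (cube_set u j s) l t = cube_set (cube_set u l t) j s.
Proof.
move=> jl; apply/ffunP => i; rewrite !cube_setE.
by case: (eqVneq i j) => [->|//]; rewrite (negbTE jl).
Qed.

Lemma ord2_cases (t : 'I_2) : t = ord0 \/ t = ord_max.
Proof. by case: t => [[|[|//]] ?]; [left|right]; apply: val_inj. Qed.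

Lemma cube_adj_set m (u : cubeV m) j t : u j != t -> cube_adj u (cube_set u j t).
Proof.
move=> ujt; rewrite /cube_adj /grid_adj (bigD1 j) //= big1 ?addn0.
  by rewrite cube_setE eqxx; case: (ord2_cases (u j)) ujt => ->; case: (ord2_cases t) => ->.
by move=> i /negbTE ij; rewrite cube_setE ij subnn.
Qed.

Lemma cube_ind m (P : cubeV m -> Prop) : P (cube0 m) ->
  (forall (u : cubeV m) j, u j = ord0 -> P u -> P (cube_set u j ord_max)) ->
  forall u, P u.
Proof.
move=> P0 PS u; have [w] := ubnP (\sum_j (u j : nat)); elim: w u => [//|w IHw] u ltw.
have [j uj|u0] := pickP (fun j => u j != ord0); last first.
  have -> : u = cube0 m; last by [].
  by apply/ffunP => i; rewrite ffunE; apply/eqP; rewrite -[_ == _]negbK u0.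
have uj1 : u j = ord_max by case: (ord2_cases (u j)) uj => ->.
have -> : u = cube_set (cube_set u j ord0) j ord_max.
  by apply/ffunP => i; rewrite !cube_setE; case: eqP => // ->.
apply: PS; first by rewrite cube_setE eqxx.
apply: IHw; move: ltw; rewrite (bigD1 j) //= [X in _ -> X < _](bigD1 j) //=.
rewrite cube_setE eqxx uj1 [X in _ -> X < _](eq_bigr (fun i => (u i : nat))) /=; first lia.
by move=> i /negbTE ij; rewrite cube_setE ij.
Qed.

Section CubeCopy.
Variables (k m : nat) (n : nat -> nat) (phi : cubeV k -> gridV m n).
Hypothesis phi_copy : subgraph_copy (@cube_adj k) (@grid_adj m n) phi.

Local Open Scope ring_scope.
Implicit Types u v : cubeV k.
Let pt u := grid_vec (phi u).
Let unit_cube j := cube_set (cube0 k) j ord_max.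
Let edge j i := pt (unit_cube j) i - pt (cube0 k) i.

Lemma pt_neq u v : u != v -> exists i, pt u i != pt v i.
Proof.
move=> /eqP uv; have [i ne|pt_eq] := pickP (fun i => pt u i != pt v i); first by exists i.
exfalso; apply/uv/(proj1 phi_copy)/ffunP => i; apply: val_inj.
by apply/eqP; rewrite -eqz_nat -[_ == _]negbK pt_eq.
Qed.

Lemma pt_adj u v : cube_adj u v -> l1norm (fun i => pt v i - pt u i) = 1.
Proof. by move=> uv; apply: grid_adj_l1norm; apply: (proj2 phi_copy). Qed.

Lemma pt_square u j l : u j = ord0 -> u l = ord0 -> j != l ->
  forall i, pt (cube_set (cube_set u l ord_max) j ord_max) i
            = pt (cube_set u l ord_max) i + pt (cube_set u j ord_max) i - pt u i.
Proof.
move=> uj ul jl.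
have jl_ne : (j == l) = false by apply: negbTE.
have set_adj v h : v h = ord0 -> cube_adj v (cube_set v h ord_max).
  by move=> vh; apply: cube_adj_set; rewrite vh.
have [i0 ne03] : exists i, pt u i != pt (cube_set (cube_set u l ord_max) j ord_max) i.
  by apply: pt_neq; apply/eqP => /ffunP/(_ j); rewrite !cube_setE eqxx uj.
have [i1 ne12] : exists i, pt (cube_set u l ord_max) i != pt (cube_set u j ord_max) i.
  by apply: pt_neq; apply/eqP => /ffunP/(_ j); rewrite !cube_setE eqxx jl_ne uj.
apply: (l1norm1_parallelogram _ _ _ _ ne03 ne12).
- exact/pt_adj/set_adj.
- exact/pt_adj/set_adj.
- by apply/pt_adj/set_adj; rewrite cube_setE jl_ne.
- rewrite cube_setC; last by rewrite eq_sym.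
  by apply/pt_adj/set_adj; rewrite cube_setE eq_sym jl_ne.
Qed.

Lemma edge_invariant u j : u j = ord0 ->
  forall i, pt (cube_set u j ord_max) i - pt u i = edge j i.
Proof.
elim/cube_ind: u j => [//|u l ul IHu] j.
have [->|jl] := eqVneq j l; first by rewrite cube_setE eqxx.
rewrite cube_setE (negbTE jl) => uj i.
by rewrite pt_square // -(IHu j uj); ring.
Qed.

Lemma pt_formula u i : pt u i = pt (cube0 k) i + \sum_j (u j : nat)%:Z * edge j i.
Proof.
elim/cube_ind: u => [|u j uj IHu].
  by rewrite big1 ?addr0 // => j _; rewrite ffunE mul0r.
rewrite -[LHS](subrK (pt u i)) edge_invariant // IHu (bigD1 j) //= [in RHS](bigD1 j) //=.
rewrite !cube_setE eqxx uj [in RHS](eq_bigr (fun h => (u h : nat)%:Z * edge h i)) /=.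
  by ring.
by move=> h /negbTE hj; rewrite cube_setE hj.
Qed.

Lemma edge_l1norm j : l1norm (edge j) = 1.
Proof. by apply/pt_adj/cube_adj_set; rewrite ffunE. Qed.

(* Otherwise [edge j = edge l] or [edge j = - edge l], and [phi] would collide on
   [unit_cube j] and [unit_cube l], resp. on [cube0] and their join. *)
Lemma edge_disjoint j l i : j != l -> edge j i != 0 -> edge l i = 0.
Proof.
move=> jl ej0; apply/eqP; rewrite -[_ == _]negbK; apply/negP => el0.
have supp_j h : h != i -> edge j h = 0 by apply: l1norm1_support (edge_l1norm j) ej0.
have supp_l h : h != i -> edge l h = 0 by apply: l1norm1_support (edge_l1norm l) el0.
have := l1norm1_coord i (edge_l1norm j); have := l1norm1_coord i (edge_l1norm l).
move: ej0 el0 => /eqP ej0 /eqP el0 bl bj.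
have [same|opp] : edge j i = edge l i \/ edge j i = - edge l i by lia.
- have [h] : exists h, pt (unit_cube j) h != pt (unit_cube l) h.
    by apply: pt_neq; apply/eqP => /ffunP/(_ j); rewrite !ffunE eqxx (negbTE jl).
  have ptE x : pt (unit_cube x) h = pt (cube0 k) h + edge x h by rewrite /edge; ring.
  rewrite !ptE; have [->|hi] := eqVneq h i; first by rewrite same eqxx.
  by rewrite supp_j ?supp_l ?eqxx.
- pose w := cube_set (unit_cube j) l ord_max.
  have [h] : exists h, pt w h != pt (cube0 k) h.
    by apply: pt_neq; apply/eqP => /ffunP/(_ l); rewrite !ffunE eqxx.
  have := @edge_invariant (unit_cube j) l.
  rewrite ffunE eq_sym (negbTE jl) ffunE => /(_ erefl h).
  rewrite -/w /edge; have [->|hi] := eqVneq h i; first by move: opp; rewrite /edge; lia.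
  by move: (supp_j h hi) (supp_l h hi); rewrite /edge; lia.
Qed.

Lemma pt_sub_le1 u v i : pt u i - pt v i <= 1.
Proof.
have -> : pt u i - pt v i = \sum_j ((u j : nat)%:Z - (v j : nat)%:Z) * edge j i.
  under eq_bigr do rewrite mulrBl; rewrite sumrB pt_formula [pt v i]pt_formula; ring.
have [j0 ej0|e0] := pickP (fun j => edge j i != 0); last first.
  by rewrite big1 // => j _; move/negbFE/eqP: (e0 j) => ->; rewrite mulr0.
rewrite (bigD1 j0) //= big1 ?addr0; last first.
  by move=> j j0j; rewrite (edge_disjoint _ ej0) ?mulr0 // eq_sym.
have := l1norm1_coord i (edge_l1norm j0).
by case: (ord2_cases (u j0)) => ->; case: (ord2_cases (v j0)) => -> /=; lia.
Qed.

Lemma cube_copy_box : exists a : 'I_m -> nat, forall u i, (a i <= phi u i <= a i + 1)%N.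
Proof.
exists (fun i => nat_of_ord (phi [arg min_(v < cube0 k) phi v i] i)) => u i.
case: arg_minnP => // v _ v_min; rewrite v_min //=.
by have := pt_sub_le1 u v i; rewrite /pt /grid_vec lerBlDr -PoszD lez_nat addnC.
Qed.

End CubeCopy.

Lemma card_grid m (n : nat -> nat) : #|gridV m n| = \prod_(i < m) n i.
Proof.
by rewrite card_dep_ffun foldrE big_image /=; apply: eq_bigr => i _; rewrite card_ord.
Qed.

Lemma card_cube m : #|cubeV m| = 2 ^ m.
Proof. by rewrite card_grid prod_nat_const card_ord. Qed.

Lemma grid_ext m (n : nat -> nat) (x y : gridV m n) :
  (forall i, x i = y i :> nat) -> x = y.
Proof. by move=> xy; apply/ffunP => i; apply: val_inj; exact: xy. Qed.

Lemma cube_copy_translate m (n : nat -> nat) (phi : cubeV m -> gridV m n) :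
  subgraph_copy (@cube_adj m) (@grid_adj m n) phi ->
  exists (a : 'I_m -> nat) (e : cubeV m -> cubeV m),
    injective e /\ forall b i, phi (e b) i = a i + b i :> nat.
Proof.
move=> phi_copy; have [a phi_box] := cube_copy_box phi_copy.
pose beta u : cubeV m := [ffun i => inord (phi u i - a i)].
have phiE u i : phi u i = a i + beta u i :> nat.
  by rewrite ffunE inordK; have := phi_box u i; lia.
have beta_inj : injective beta.
  by move=> u v buv; apply: (proj1 phi_copy); apply: grid_ext => i; rewrite !phiE buv.
exists a, (invF beta_inj); split; first exact: can_inj (f_invF beta_inj).
by move=> b i; rewrite phiE f_invF.
Qed.

Lemma translate_copy m (n : nat -> nat) (rho : cubeV m -> gridV m n) (a : 'I_m -> nat) :
  (forall c i, rho c i = a i + c i :> nat) ->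
  subgraph_copy (@cube_adj m) (@grid_adj m n) rho.
Proof.
move=> rhoE; split=> [c c' rcc' | c c' cc'].
  apply/ffunP => i; apply: val_inj; apply/eqP.
  by rewrite -(eqn_add2l (a i)) -!rhoE rcc'.
rewrite /grid_adj (eq_bigr (fun i => (c i - c' i) + (c' i - c i))) //.
by move=> i _; rewrite !rhoE !subnDl.
Qed.

Lemma injective_range_surj (T : finType) (f : T -> nat) : injective f ->
  (forall x, 1 <= f x <= #|T|) -> forall k, 1 <= k <= #|T| -> exists x, f x = k.
Proof.
move=> f_inj f_range k k_range.
have [_ img] : (size (map f (enum T)) = size (iota 1 #|T|)) *
               (map f (enum T) =i iota 1 #|T|).
  apply: uniq_min_size; first by rewrite map_inj_uniq ?enum_uniq.
    by move=> _ /mapP [x _ ->]; rewrite mem_iota; have := f_range x; lia.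
  by rewrite size_map size_iota -cardE.
have : k \in iota 1 #|T| by rewrite mem_iota; lia.
by rewrite -img => /mapP [x _ ->]; exists x.
Qed.

Lemma addn_mul_inj (N r1 r2 q1 q2 : nat) : 1 <= r1 <= N -> 1 <= r2 <= N ->
  r1 + q1 * N = r2 + q2 * N -> r1 = r2 /\ q1 = q2.
Proof.
move=> r1N r2N E; case: (ltngtP q1 q2) => [lt_q|lt_q|eq_q]; last by subst; split=> //; lia.
- have : q1.+1 * N <= q2 * N by rewrite leq_mul2r lt_q orbT.
  by rewrite mulSn; lia.
- have : q2.+1 * N <= q1 * N by rewrite leq_mul2r lt_q orbT.
  by rewrite mulSn; lia.
Qed.

Lemma double_sum_involutive (T : finType) (s : T -> T) (g : T -> nat) c :
  involutive s -> (forall t, g t + g (s t) = c) -> 2 * \sum_t g t = #|T| * c.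
Proof.
move=> sK gs; rewrite mul2n -addnn {2}(reindex_inj (inv_inj sK)) -big_split /=.
by rewrite (eq_bigr (fun=> c)) // sum_nat_const.
Qed.

Lemma odd_sum_flip p (F G : 'I_p -> nat) i0 :
  (forall i, i != i0 -> F i = G i) -> odd (F i0) = ~~ odd (G i0) ->
  odd (\sum_i F i) = ~~ odd (\sum_i G i).
Proof.
move=> FG Fi0; rewrite (bigD1 i0) //= [X in _ = ~~ odd X](bigD1 i0) //=.
by rewrite (eq_bigr G FG) !oddD Fi0; case: odd; case: odd.
Qed.

Definition cube_rcons m (c : cubeV m) (t : 'I_2) : cubeV m.+1 :=
  [ffun i : 'I_m.+1 => if insub (i : nat) is Some j then c j else t].

Lemma grid_restr_rcons m (c : cubeV m) t : grid_restr (cube_rcons c t) = c.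
Proof.
apply/ffunP => j; rewrite !ffunE; case: insubP => [j' _ j'E|]; last by rewrite /= ltn_ord.
by congr (c _); apply: val_inj.
Qed.

Lemma cube_rcons_restr m (b : cubeV m.+1) : cube_rcons (grid_restr b) (b ord_max) = b.
Proof.
apply/ffunP => i; rewrite ffunE; case: insubP => [j _ jE|i_ge].
  by rewrite ffunE; congr (b _); apply: val_inj.
congr (b _); apply: val_inj.
by apply/eqP; rewrite eqn_leq leqNgt i_ge -ltnS ltn_ord.
Qed.

Lemma sum_cube_restr m (G : cubeV m -> nat) :
  \sum_(b : cubeV m.+1) G (grid_restr b) = 2 * \sum_c G c.
Proof.
rewrite (partition_big (fun b : cubeV m.+1 => b ord_max) predT) //=.
rewrite (eq_bigr (fun=> \sum_(c : cubeV m) G c)) ?sum_nat_const ?card_ord // => t _.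
rewrite (reindex_onto (fun c : cubeV m => cube_rcons c t) (@grid_restr m.+1 _)); last first.
  by move=> b /eqP <-; exact: cube_rcons_restr.
apply: eq_big => c; last by rewrite grid_restr_rcons.
by rewrite grid_restr_rcons eqxx ffunE insubF ?eqxx /= ?ltnn.
Qed.

Lemma grid_coord_last m (n : nat -> nat) (x : gridV m.+1 n) : grid_coord x m = x ord_max.
Proof.
rewrite /grid_coord (nth_map ord0) ?size_enum_ord //.
by congr (nat_of_ord (x _)); apply: val_inj; rewrite /= nth_enum_ord.
Qed.

Section LiftLayer.
Variables (m : nat) (n : nat -> nat).
Implicit Types x y : gridV m.+2 n.

(* The multiplier of [N] in [lift_label]: [x_d - 1] or [n_d - x_d] in the
   1-based coordinates of the paper. *)
Definition lift_layer x : nat :=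
  if odd (\sum_(i < m.+1) (grid_restr x i : nat).+1) then n m.+1 - (x ord_max).+1
  else x ord_max.

Lemma lift_labelE (ft : gridV m.+1 n -> nat) x :
  @lift_label m.+2 n ft x = ft (grid_restr x) + lift_layer x * \prod_(i < m.+1) n i.
Proof. by rewrite /lift_label /lift_layer grid_coord_last /= subn1; case: odd. Qed.

Lemma lift_layer_lt x : lift_layer x < n m.+1.
Proof.
have x_lt : x ord_max < n m.+1 := ltn_ord _.
by rewrite /lift_layer; case: ifP => _; lia.
Qed.

Lemma lift_layer_flip x y : x ord_max = y ord_max :> nat ->
  odd (\sum_(i < m.+1) (grid_restr x i : nat).+1) =
  ~~ odd (\sum_(i < m.+1) (grid_restr y i : nat).+1) ->
  lift_layer x + lift_layer y = n m.+1 - 1.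
Proof.
move=> xy odd_xy; rewrite /lift_layer odd_xy xy.
by case: (y ord_max) => t /= t_lt; case: odd => /=; lia.
Qed.

Lemma grid_restr_last_inj x y :
  grid_restr x = grid_restr y -> x ord_max = y ord_max -> x = y.
Proof.
move=> /ffunP xy_restr xy_last; apply/ffunP => i.
have [i_lt|i_ge] := ltnP i m.+1.
  have -> : i = widen_ord (leq_pred m.+2) (Ordinal i_lt) by apply: val_inj.
  by have := xy_restr (Ordinal i_lt); rewrite !ffunE.
have -> : i = ord_max by apply/val_inj/eqP; rewrite eqn_leq -ltnS ltn_ord.
exact: xy_last.
Qed.

Lemma sum_lift_layer_translate (psi : cubeV m.+2 -> gridV m.+2 n) (a : 'I_m.+2 -> nat) :
  (forall b i, psi b i = a i + b i :> nat) ->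
  \sum_b lift_layer (psi b) = 2 ^ m.+1 * (n m.+1 - 1).
Proof.
move=> psiE; pose flip (b : cubeV m.+2) := cube_set b ord0 (rev_ord (b ord0)).
have flipK : involutive flip.
  by move=> b; apply/ffunP => i; rewrite !cube_setE; case: eqP => [->|]; rewrite ?rev_ordK.
apply/eqP; rewrite -(eqn_pmul2l (isT : 0 < 2)) mulnA -expnS -card_cube; apply/eqP.
apply: (double_sum_involutive flipK) => b.
have restrE b' (i : 'I_m.+1) : grid_restr (psi b') i
    = a (widen_ord (leq_pred m.+2) i) + b' (widen_ord (leq_pred m.+2) i) :> nat.
  by rewrite ffunE (psiE b' (widen_ord (leq_pred m.+2) i)).
apply: lift_layer_flip; first by rewrite (psiE b) (psiE (flip b)) cube_setE.
apply: (@odd_sum_flip _ _ _ ord0) => [i i0|]; rewrite !restrE cube_setE.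
  rewrite (_ : (widen_ord _ i == ord0) = false) //.
  by apply: contraNF i0 => /eqP/(congr1 val) i0; apply/eqP/val_inj.
rewrite (_ : widen_ord _ ord0 = ord0) ?eqxx; last exact: val_inj.
by case: (ord2_cases (b ord0)) => -> /=; rewrite !oddD; case: odd.
Qed.

End LiftLayer.

Section LiftMagic.
Variables (m : nat) (n : nat -> nat) (ft : gridV m.+1 n -> nat) (S : nat).
Hypothesis ft_magic : magic_labeling (@cube_adj m.+1) (@grid_adj m.+1 n) ft S.

Let N := \prod_(i < m.+1) n i.
Let f := @lift_label m.+2 n ft.

Lemma ft_range y : 1 <= ft y <= N.
Proof. by case: ft_magic => _ ft_bound _ _; rewrite /N -card_grid. Qed.

Lemma lift_label_inj : injective f.
Proof.
move=> x y; rewrite /f !lift_labelE.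
move=> /(addn_mul_inj (ft_range _) (ft_range _)) [ft_xy layer_xy].
have restr_xy : grid_restr x = grid_restr y.
  by case: ft_magic => ft_inj _ _ _; exact: ft_inj ft_xy.
apply: grid_restr_last_inj => //; apply: val_inj; move: layer_xy.
rewrite /lift_layer restr_xy; case: (x ord_max) => s /= s_lt; case: (y ord_max) => t /= t_lt.
by case: odd; lia.
Qed.

Lemma lift_label_range x : 1 <= f x <= #|gridV m.+2 n|.
Proof.
have -> : #|gridV m.+2 n| = N * n m.+1 by rewrite card_grid big_ord_recr.
have : (lift_layer x).+1 * N <= n m.+1 * N by rewrite leq_mul2r lift_layer_lt orbT.
by rewrite /f lift_labelE mulSn mulnC; have := ft_range (grid_restr x); lia.
Qed.

Lemma sum_ft_translate (psi : cubeV m.+2 -> gridV m.+2 n) (a : 'I_m.+2 -> nat) :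
  (forall b i, psi b i = a i + b i :> nat) ->
  \sum_b ft (grid_restr (psi b)) = 2 * S.
Proof.
move=> psiE; pose rho c := grid_restr (psi (cube_rcons c ord0)).
have rhoE c i : rho c i = a (widen_ord (leq_pred m.+2) i) + c i :> nat.
  rewrite ffunE (psiE _ (widen_ord (leq_pred m.+2) i)); congr (_ + nat_of_ord _).
  by have /ffunP/(_ i) := grid_restr_rcons c ord0; rewrite ffunE.
have -> : \sum_b ft (grid_restr (psi b)) = \sum_(b : cubeV m.+2) ft (rho (grid_restr b)).
  apply: eq_bigr => b _; congr ft; apply: grid_ext => i.
  by rewrite rhoE ffunE (psiE _ (widen_ord (leq_pred m.+2) i)) ffunE.
rewrite (sum_cube_restr (fun c => ft (rho c))).
by case: ft_magic => _ _ _ ->; last exact: translate_copy rhoE.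
Qed.

Lemma lift_label_copy_sum (phi : cubeV m.+2 -> gridV m.+2 n) :
  subgraph_copy (@cube_adj m.+2) (@grid_adj m.+2 n) phi ->
  \sum_u f (phi u) = 2 * S + 2 ^ m.+1 * (n m.+1 - 1) * N.
Proof.
move=> phi_copy; have [a [e [e_inj phiE]]] := cube_copy_translate phi_copy.
rewrite (reindex_inj e_inj) /=; under eq_bigr do rewrite /f lift_labelE.
by rewrite big_split -big_distrl /= (sum_ft_translate phiE) (sum_lift_layer_translate phiE).
Qed.

End LiftMagic.

Theorem lemma5 (d : nat) (n : nat -> nat) (ft : gridV d.-1 n -> nat) (S : nat) :
  3 <= d ->
  (forall i, i.+1 < d -> n i.+1 <= n i) ->
  (forall i, i < d -> 2 <= n i) ->
  magic_labeling (@cube_adj d.-1) (@grid_adj d.-1 n) ft S ->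
  magic_labeling (@cube_adj d) (@grid_adj d n) (lift_label ft)
    (2 * S + 2 ^ d.-1 * (n d.-1 - 1) * \prod_(i < d.-1) n i).
Proof.
case: d ft => [|[|m]] // ft _ _ _ ft_magic.
split; [exact: lift_label_inj ft_magic | exact: lift_label_range ft_magic | |].
  exact: injective_range_surj (lift_label_inj ft_magic) (lift_label_range ft_magic).
exact: lift_label_copy_sum ft_magic.
Qed.
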